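(* Let $\mathcal{G}=\langle\mathcal{Q},\mathbf{f}\rangle$ be a monotone NEP satisfying Assumption 2, with nonempty set of Nash equilibria, and let $\tau>0$ be such that $\boldsymbol{\Upsilon}_{\mathbf{F}_{\tau,\mathbf{y}}}$ is a P-matrix for every $\mathbf{y}$ (so $\mathcal{G}_{\tau,\mathbf{y}}$ has a unique NE $\mathbf{S}_\tau(\mathbf{y})$). Let $\{\varepsilon^{(n)}\}\subset[0,\infty)$ with $\sum_n\varepsilon^{(n)}<\infty$ and $\{\eta^{(n)}\}\subset[R_m,R_M]$ with $0<R_m\le R_M<2$. Consider any sequence defined by $\mathbf{x}^{(0)}\in\mathcal{Q}$ and, for $n\ge0$, $\mathbf{x}^{(n+1)}=(1-\eta^{(n)})\mathbf{x}^{(n)}+\eta^{(n)}\mathbf{z}^{(n)}$, where $\mathbf{z}^{(n)}$ is any point with $\|\mathbf{z}^{(n)}-\mathbf{S}_\tau(\mathbf{x}^{(n)})\|\le\varepsilon^{(n)}$. Then $\{\mathbf{x}^{(n)}\}$ converges to a NE of $\mathcal{G}$.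
   Context: Real NEP: player $i$ chooses $\mathbf{x}_i\in\mathcal{Q}_i\subseteq\mathbb{R}^{n_i}$ minimizing $f_i(\mathbf{x}_i,\mathbf{x}_{-i})$; $\mathcal{Q}=\prod_i\mathcal{Q}_i$. NE: $\mathbf{x}^\star\in\mathcal{Q}$ with $f_i(\mathbf{x}^\star_i,\mathbf{x}^\star_{-i})\le f_i(\mathbf{x}_i,\mathbf{x}^\star_{-i})$ for all $\mathbf{x}_i\in\mathcal{Q}_i$, all $i$. Assumption 1: $\mathcal{Q}_i$ nonempty closed convex, $f_i$ continuously differentiable on $\mathcal{Q}$ and convex in $\mathbf{x}_i$. Assumption 2: $f_i$ twice continuously differentiable with bounded derivatives on $\mathcal{Q}$. Monotone NEP: Assumption 1 and $\mathbf{F}(\mathbf{x})=(\nabla_{\mathbf{x}_i}f_i(\mathbf{x}))_i$ monotone on $\mathcal{Q}$. $\mathcal{G}_{\tau,\mathbf{y}}$: game where player $i$ minimizes $f_i(\mathbf{x}_i,\mathbf{x}_{-i})+\frac\tau2\|\mathbf{x}_i-\mathbf{y}_i\|^2$ over $\mathcal{Q}_i$, with gradient map $\mathbf{F}_{\tau,\mathbf{y}}=\mathbf{F}+\tau(\cdot-\mathbf{y})$. $\boldsymbol{\Upsilon}_{\mathbf{G}}$ for partitioned $\mathbf{G}$: diagonal $\inf_{\mathcal{Q}}\lambda_{\rm least}(\mathbf{J}_i\mathbf{G}_i)$, off-diagonal $-\sup_{\mathcal{Q}}\|\mathbf{J}_j\mathbf{G}_i\|_2$, $\lambda_{\rm least}(\mathbf{A})$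 smallest eigenvalue of $(\mathbf{A}+\mathbf{A}^T)/2$. P-matrix: all principal minors positive. *)

From Stdlib Require Import Reals.
From mathcomp Require Import all_boot all_fingroup.

Set Implicit Arguments.
Unset Strict Implicit.
Unset Printing Implicit Defensive.

Local Open Scope R_scope.

Definition rsum (T : finType) (g : T -> R) : R := \big[Rplus/R0]_(t : T) g t.
Definition nrm (T : finType) (v : T -> R) : R := sqrt (rsum (fun t => (v t)^2)).
Definition vsub (T : Type) (u v : T -> R) : T -> R := fun t => u t - v t.

(* N players; player i has dimension d i.  A coordinate of the full space
   R^{n_1+...+n_N} is a pair (i, k) with k : 'I_(d i). *)
Definition Idx (N : nat) (d : 'I_N -> nat) : finType := {i : 'I_N & 'I_(d i)}.
Definition profile (N : nat) (d : 'I_N -> nat) := Idx d -> R.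

Definition coord (N : nat) (d : 'I_N -> nat) (i : 'I_N) (k : 'I_(d i)) : Idx d :=
  existT (fun i => 'I_(d i)) i k.

Definition block (N : nat) (d : 'I_N -> nat) (x : profile d) (i : 'I_N)
  : 'I_(d i) -> R := fun k => x (coord k).
Arguments block {N d} x i.

Definition inQ (N : nat) (d : 'I_N -> nat) (Q : forall i : 'I_N, ('I_(d i) -> R) -> Prop)
  (x : profile d) : Prop := forall i, Q i (block x i).

Definition same_off (N : nat) (d : 'I_N -> nat) (i : 'I_N) (x y : profile d) : Prop :=
  forall a : Idx d, tag a <> i -> y a = x a.

Definition closed_blk (m : nat) (C : ('I_m -> R) -> Prop) : Prop :=
  forall u, ~ C u -> exists r, 0 < r /\ forall v, nrm (vsub v u) < r -> ~ C v.

Definition convex_blk (m : nat) (C : ('I_m -> R) -> Prop) : Prop :=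
  forall u v t, C u -> C v -> 0 <= t <= 1 ->
    C (fun k => t * u k + (1 - t) * v k).

Definition open_prof (T : finType) (O : (T -> R) -> Prop) : Prop :=
  forall x, O x -> exists r, 0 < r /\ forall y, nrm (vsub y x) < r -> O y.

Definition isNE (N : nat) (d : 'I_N -> nat) (Q : forall i : 'I_N, ('I_(d i) -> R) -> Prop)
  (g : 'I_N -> profile d -> R) (x : profile d) : Prop :=
  inQ Q x /\
  forall (i : 'I_N) (y : profile d), same_off i x y -> Q i (block y i) -> g i x <= g i y.

(* costs of the regularized game G_{tau,y}: f_i(x) + tau/2 ||x_i - y_i||^2 *)
Definition reg_costs (N : nat) (d : 'I_N -> nat) (f : 'I_N -> profile d -> R)
  (tau : R) (y : profile d) : 'I_N -> profile d -> R :=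
  fun i x => f i x + tau / 2 * (nrm (vsub (block x i) (block y i)))^2.

Definition upd (T : finType) (x : T -> R) (a : T) (t : R) : T -> R :=
  fun b => if b == a then t else x b.

Definition partial (T : finType) (g : (T -> R) -> R) (a : T) (x : T -> R) (D : R) : Prop :=
  derivable_pt_lim (fun t => g (upd x a t)) (x a) D.

Definition cont_on (T : finType) (O : (T -> R) -> Prop) (h : (T -> R) -> R) : Prop :=
  forall x, O x -> forall e, 0 < e -> exists del, 0 < del /\
    forall y, O y -> nrm (vsub y x) < del -> Rabs (h y - h x) < e.

Definition sym_eig (m : nat) (A : 'I_m -> 'I_m -> R) (lam : R) : Prop :=
  exists v : 'I_m -> R, (exists k, v k <> 0) /\
    forall k, rsum (fun l => (A k l + A l k) / 2 * v l) = lam * v k.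

Definition is_lambda_least (m : nat) (A : 'I_m -> 'I_m -> R) (lam : R) : Prop :=
  sym_eig A lam /\ forall mu, sym_eig A mu -> lam <= mu.

Definition is_spec_norm (p q : nat) (M : 'I_p -> 'I_q -> R) (s : R) : Prop :=
  is_lub (fun r => exists v : 'I_q -> R, nrm v = 1 /\
                     r = nrm (fun k => rsum (fun l => M k l * v l))) s.

Definition is_glb_R (E : R -> Prop) (m : R) : Prop :=
  (forall r, E r -> m <= r) /\ (forall b, (forall r, E r -> b <= r) -> b <= m).

Definition psign (N : nat) (s : {perm 'I_N}) : R := if odd_perm s then -1 else 1.

Definition principal_minor (N : nat) (U : 'I_N -> 'I_N -> R) (S : {set 'I_N}) : R :=
  \big[Rplus/R0]_(s : {perm 'I_N} | [forall i, (i \notin S) ==> (s i == i)])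
     (psign s * \big[Rmult/R1]_(i in S) U i (s i)).

Definition P_matrix (N : nat) (U : 'I_N -> 'I_N -> R) : Prop :=
  forall S : {set 'I_N}, S != set0 -> 0 < principal_minor U S.

(* Block Jacobian of a partitioned map G: JG i j x k l = d G_{(i,k)} / d x_{(j,l)} (x),
   i.e. JG i j x is J_j G_i (x). *)
Definition block_jac (N : nat) (d : 'I_N -> nat) :=
  forall i j : 'I_N, profile d -> 'I_(d i) -> 'I_(d j) -> R.

Definition is_Upsilon (N : nat) (d : 'I_N -> nat)
  (Q : forall i : 'I_N, ('I_(d i) -> R) -> Prop) (JG : block_jac d)
  (U : 'I_N -> 'I_N -> R) : Prop :=
  (forall i, is_glb_R (fun mu => exists x, inQ Q x /\ is_lambda_least (JG i i x) mu) (U i i)) /\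
  (forall i j, i <> j ->
     is_lub (fun s => exists x, inQ Q x /\ is_spec_norm (JG i j x) s) (- U i j)).

Definition F_tau (N : nat) (d : 'I_N -> nat) (F : profile d -> profile d) (tau : R)
  (y : profile d) : profile d -> profile d :=
  fun x a => F x a + tau * (x a - y a).

Definition conv_to (T : finType) (x : nat -> T -> R) (l : T -> R) : Prop :=
  forall e, 0 < e -> exists n0, forall n, (n0 <= n)%nat -> nrm (vsub (x n) l) < e.

(* the gradient map F(x) = (grad_{x_i} f_i(x))_i, from the first partials D1 i a x
   of f_i w.r.t. coordinate a *)
Definition grad (N : nat) (d : 'I_N -> nat) (D1 : 'I_N -> Idx d -> profile d -> R)
  : profile d -> profile d := fun x a => D1 (tag a) a x.

(* Let F be the gradient map of the game and w_n a NE of the regularized game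
   G_{tau, x_n} with ||z_n - w_n|| <= eps_n.  The proof is the classical one for
   averaged resolvents with summable errors:
   - variational characterization: a NE of G_{tau,y} solves VI(Q, F_{tau,y}),
     a NE of G solves VI(Q, F), and conversely a solution of VI(Q, F) is a NE
     (first-order expansion of f_i plus convexity of f_i in x_i);
   - firm nonexpansiveness: for every NE p, monotonicity of F gives
     ||w_n - p||^2 + ||x_n - w_n||^2 <= ||x_n - p||^2, so the relaxed step is
     quasi-Fejer, ||x_{n+1} - p|| <= ||x_n - p|| + 2 eps_n, and the residual
     ||x_n - w_n|| tends to 0;
   - every cluster point of (x_n) is then a NE (Q is closed, F continuous);
   - a quasi-Fejer sequence all of whose cluster points lie in the target set
     converges to one of them (Bolzano-Weierstrass in finite dimension). *)

From HB Require Import structures.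
From Stdlib Require Import Reals Lra Psatz FunctionalExtensionality ClassicalEpsilon Classical.
From mathcomp Require Import all_boot all_fingroup zify.

Local Open Scope R_scope.

Definition strict_incr (phi : nat -> nat) : Prop := forall n, (phi n < phi n.+1)%N.

Lemma strict_incr_mono {phi} : strict_incr phi -> forall m n, (m <= n)%N -> (phi m <= phi n)%N.
Proof.
move=> H m n /subnK <-; elim: (n - m)%N => [|k IH] //.
by rewrite addSn; apply: leq_trans IH (ltnW (H _)).
Qed.

Lemma strict_incr_ge {phi} : strict_incr phi -> forall n, (n <= phi n)%N.
Proof. by move=> H; elim=> [|n IH] //; apply: leq_ltn_trans IH (H n). Qed.

Lemma strict_incr_comp phi psi :
  strict_incr phi -> strict_incr psi -> strict_incr (fun n => phi (psi n)).
Proof.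
move=> Hphi Hpsi n /=; have := Hphi (psi n); have := strict_incr_mono Hphi _ _ (Hpsi n); lia.
Qed.

Lemma Un_cv_subseq {u l phi} : Un_cv u l -> strict_incr phi -> Un_cv (fun n => u (phi n)) l.
Proof.
move=> Hu Hphi e ep; have [N HN] := Hu e ep; exists N => n Hn.
by apply: HN; have := strict_incr_ge Hphi n; lia.
Qed.

Lemma Un_cv_const c : Un_cv (fun _ => c) c.
Proof. by move=> e ep; exists 0%N => n _; rewrite /Rdist Rminus_diag Rabs_R0. Qed.

Lemma Un_cv_ext {u v l} : (forall n, u n = v n) -> Un_cv u l -> Un_cv v l.
Proof. by move=> E H e ep; have [N HN] := H e ep; exists N => n; rewrite -E; apply: HN. Qed.

Lemma Un_cv_squeeze0 u v : (forall n, 0 <= u n <= v n) -> Un_cv v 0 -> Un_cv u 0.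
Proof.
move=> H Hv e ep; have [N HN] := Hv e ep; exists N => n Hn.
by move: (HN n Hn) (H n); rewrite /Rdist !Rminus_0_r; split_Rabs; lra.
Qed.

Lemma Un_cv_sqr0 u : (forall n, 0 <= u n) -> Un_cv (fun n => u n ^ 2) 0 -> Un_cv u 0.
Proof.
move=> H Hu e ep; have [N HN] := Hu (e ^ 2) ltac:(nra); exists N => n Hn.
move: (HN n Hn) (H n); rewrite /Rdist !Rminus_0_r; split_Rabs; nra.
Qed.

Lemma Un_cv_scal0 u c : 0 < c -> Un_cv (fun n => c * u n) 0 -> Un_cv u 0.
Proof.
move=> cp Hu e ep; have [N HN] := Hu (c * e) ltac:(nra); exists N => n Hn.
move: (HN n Hn); rewrite /Rdist !Rminus_0_r Rabs_mult (Rabs_pos_eq c); nra.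
Qed.

Lemma summable_cv0 {e s} : infinite_sum e s -> Un_cv e 0.
Proof.
move=> H ee eep; have [N HN] := H (ee / 2) ltac:(lra); exists N.+1 => -[|n] Hn; first lia.
move: (HN n.+1 ltac:(lia)) (HN n ltac:(lia)) => /=.
by rewrite /Rdist Rminus_0_r; split_Rabs; lra.
Qed.

Lemma infinite_sum_scal e s c : infinite_sum e s -> infinite_sum (fun n => c * e n) (c * s).
Proof.
move=> H ee eep.
have [M HM] := CV_mult _ _ _ _ (Un_cv_const c) H ee eep; exists M => n Hn.
suff -> : sum_f_R0 (fun n => c * e n) n = c * sum_f_R0 e n by exact: HM.
by elim: n {Hn} => [|n IH] //=; rewrite IH; ring.
Qed.

Lemma quasi_fejer_cv a e s : (forall n, 0 <= a n) -> (forall n, 0 <= e n) ->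
  infinite_sum e s -> (forall n, a n.+1 <= a n + e n) ->
  (exists l, Un_cv a l) /\ (forall n, a n <= a 0%N + s).
Proof.
move=> Ha He Hs Hstep.
pose b n := a n - sum_f_R0 e n + e n.
have b_decr : forall n, b n.+1 <= b n by move=> n; rewrite /b /=; have := Hstep n; lra.
have b_le0 : forall n, b n <= a 0%N.
  by elim=> [|n IH]; [rewrite /b /=; lra | have := b_decr n; lra].
have b_ge : forall n, - s <= b n.
  by move=> n; rewrite /b; have := sum_incr e n s Hs He; have := Ha n; have := He n; lra.
split; last by move=> n; have := b_le0 n; have := sum_incr e n s Hs He; have := He n; rewrite /b; lra.
have b_ub : has_ub (opp_seq b) by exists s => r [i ->]; rewrite /opp_seq; have := b_ge i; lra.
have [l Hl] := growing_cv (opp_seq b) (fun n => Ropp_le_contravar _ _ (b_decr n)) b_ub.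
have Hb : Un_cv b (- l).
  move=> ee eep; have [N HN] := Hl ee eep; exists N => n Hn.
  by move: (HN n Hn); rewrite /Rdist /opp_seq; split_Rabs; lra.
exists (- l + s - 0) => ee eep.
have [N HN] := CV_minus _ _ _ _ (CV_plus _ _ _ _ Hb Hs) (summable_cv0 Hs) ee eep.
by exists N => n Hn; have := HN n Hn; rewrite /b; have -> : a n - sum_f_R0 e n + e n + sum_f_R0 e n - e n = a n by ring.
Qed.

Lemma cluster_subseq {u l} : ValAdh u l ->
  exists phi, strict_incr phi /\ Un_cv (fun n => u (phi n)) l.
Proof.
move=> Hl.
have Hch : forall (N k : nat), exists p, (N <= p)%N /\ Rabs (u p - l) < / INR k.+1.
  move=> N k; have pos : 0 < / INR k.+1 by apply/Rinv_0_lt_compat/lt_0_INR; lia.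
  have nbh : neighbourhood (fun y => Rabs (y - l) < / INR k.+1) l.
    by exists (mkposreal _ pos) => y; apply.
  have [p [Hp Hv]] := Hl _ N nbh.
  by exists p; split => //; apply/leP.
have [ch chP] := choice _ (fun Nk : nat * nat => Hch Nk.1 Nk.2).
pose fix phi n := if n is m.+1 then ch ((phi m).+1, n) else ch (0%N, 0%N).
have phi_close : forall n, Rabs (u (phi n) - l) < / INR n.+1 by case=> [|n]; apply: (chP (_, _)).2.
exists phi; split; first by move=> n; exact: (chP (_, _)).1.
move=> e ep; have [M [HM M0]] := archimed_cor1 e ep; exists M => n Hn.
apply: Rlt_trans (phi_close n) _; apply: Rle_lt_trans HM.
by apply: Rinv_le_contravar; [apply: lt_0_INR; lia | apply: le_INR; lia].
Qed.

Lemma bolzano_weierstrass {T : finType} {u : nat -> T -> R} :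
  (forall a, exists B, forall n, Rabs (u n a) <= B) ->
  exists phi, strict_incr phi /\ exists xb : T -> R, forall a, Un_cv (fun n => u (phi n) a) (xb a).
Proof.
move=> HB.
suff /(_ (index_enum T)) [phi [Hphi [xb Hxb]]] : forall r : seq T, exists phi, strict_incr phi /\
    exists xb : T -> R, forall a, a \in r -> Un_cv (fun n => u (phi n) a) (xb a).
  by exists phi; split => //; exists xb => a; exact: Hxb (mem_index_enum a).
elim=> [|a r [phi [Hphi [xb Hxb]]]].
  by exists id; split => //; exists (fun _ => 0) => a; rewrite in_nil.
have [B HBa] := HB a.
have [la Hla] : exists la, ValAdh (fun n => u (phi n) a) la.
  apply: Bolzano_Weierstrass (compact_P3 (- B) B) _ => n.
  by move: (HBa (phi n)); split_Rabs; lra.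
have [psi [Hpsi Hconv]] := cluster_subseq Hla.
exists (fun n => phi (psi n)); split; first exact: strict_incr_comp.
exists (fun b => if b == a then la else xb b) => b; rewrite inE; case: eqP => [-> _ //| _ /= br].
exact: Un_cv_subseq (Hxb b br) Hpsi.
Qed.

HB.instance Definition _ := Monoid.isComLaw.Build R R0 Rplus
  (fun a b c => esym (Rplus_assoc a b c)) Rplus_comm Rplus_0_l.

(* k * H / (H + 1) stays below k: the device that turns "small enough" into an explicit bound. *)
Lemma shrink_lt {k H} : 0 < k -> 0 <= H -> k / (H + 1) * H < k.
Proof.
move=> kp H0; have -> : k / (H + 1) * H = k - k / (H + 1) by field; lra.
have : 0 < k / (H + 1) by apply: Rdiv_lt_0_compat; lra.
lra.
Qed.

Section FiniteSums.
Context {T : finType}.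
Implicit Types f g h u v : T -> R.

Lemma rsum_ext {f g} : (forall t, f t = g t) -> rsum f = rsum g.
Proof. by move=> H; apply: eq_bigr => t _; apply: H. Qed.

Lemma rsum_add f g : rsum (fun t => f t + g t) = rsum f + rsum g.
Proof. exact: big_split. Qed.

Lemma rsum_scal c f : rsum (fun t => c * f t) = c * rsum f.
Proof.
apply: (big_rec2 (fun a b => a = c * b)); first by ring.
by move=> t a b _ ->; ring.
Qed.

Lemma rsum_lin3 a b c f g h :
  rsum (fun t => a * f t + b * g t + c * h t) = a * rsum f + b * rsum g + c * rsum h.
Proof. by rewrite !rsum_add !rsum_scal. Qed.

Lemma rsum0 : rsum (fun _ : T => 0) = 0.
Proof. exact: big1. Qed.

Lemma rsum_le {f g} : (forall t, f t <= g t) -> rsum f <= rsum g.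
Proof.
move=> H; apply: (big_rec2 (fun a b => a <= b)); first lra.
by move=> t a b _ Hab; have := H t; lra.
Qed.

Lemma rsum_ge0 f : (forall t, 0 <= f t) -> 0 <= rsum f.
Proof. by move=> H; rewrite -rsum0; apply: rsum_le. Qed.

Lemma rsum_term f a : (forall t, 0 <= f t) -> f a <= rsum f.
Proof.
move=> H; rewrite /rsum (bigD1 a) //=.
have : 0 <= \big[Rplus/R0]_(i | i != a) f i.
  by apply: (big_ind (fun x => 0 <= x)) => //; [lra | move=> *; lra].
lra.
Qed.

Lemma Un_cv_rsum (s : nat -> T -> R) (l : T -> R) :
  (forall a, Un_cv (fun n => s n a) (l a)) -> Un_cv (fun n => rsum (s n)) (rsum l).
Proof.
move=> H; rewrite /rsum; elim: (index_enum T) => [|a r IH].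
  by rewrite big_nil; apply: Un_cv_ext (Un_cv_const _) => n; rewrite big_nil.
rewrite big_cons; apply: Un_cv_ext (CV_plus _ _ _ _ (H a) IH) => n.
by rewrite big_cons.
Qed.

Definition ip u v := rsum (fun t => u t * v t).
Definition nsq u := rsum (fun t => (u t) ^ 2).

Lemma nsq_ge0 u : 0 <= nsq u.
Proof. by apply: rsum_ge0 => t; apply: pow2_ge_0. Qed.

Lemma nrm_ge0 u : 0 <= nrm u.
Proof. exact: sqrt_pos. Qed.

Lemma nrm_sq u : (nrm u) ^ 2 = nsq u.
Proof. by rewrite /nrm pow2_sqrt //; apply: nsq_ge0. Qed.

Lemma nrm_vsub_sym u v : nrm (vsub u v) = nrm (vsub v u).
Proof. by rewrite /nrm; congr sqrt; apply: rsum_ext => a; rewrite /vsub; ring. Qed.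

Lemma coord_le_nrm u a : Rabs (u a) <= nrm u.
Proof.
rewrite /nrm -sqrt_Rsqr_abs; apply: sqrt_le_1_alt; rewrite Rsqr_pow2.
by apply: (rsum_term (fun t => u t ^ 2)) => t; apply: pow2_ge_0.
Qed.

Lemma nrm_le_sum u : nrm u <= rsum (fun t => Rabs (u t)).
Proof.
set S := rsum _.
have S0 : 0 <= S by apply: rsum_ge0 => t; apply: Rabs_pos.
rewrite -(sqrt_pow2 S S0); apply: sqrt_le_1_alt.
have -> : S ^ 2 = rsum (fun t => S * Rabs (u t)) by rewrite rsum_scal /S; ring.
apply: rsum_le => t; rewrite -pow2_abs.
have := rsum_term (fun t => Rabs (u t)) t (fun t => Rabs_pos (u t)); rewrite -/S.
have := Rabs_pos (u t); nra.
Qed.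

Lemma nsq_lin u v k : nsq (fun t => u t + k * v t) = nsq u + 2 * k * ip u v + k ^ 2 * nsq v.
Proof.
rewrite /nsq /ip -(Rmult_1_l (rsum (fun t => u t ^ 2))) -rsum_lin3.
by apply: rsum_ext => t; ring.
Qed.

(* Cauchy-Schwarz, squared form: minimize nsq (u - k v) over k. *)
Lemma cauchy_schwarz_sq u v : (ip u v) ^ 2 <= nsq u * nsq v.
Proof.
have [v0 | vp] : nsq v = 0 \/ 0 < nsq v by have := nsq_ge0 v; lra.
  have Hv : forall t, v t = 0.
    move=> t; have := rsum_term (fun t => v t ^ 2) t (fun t => pow2_ge_0 (v t)).
    by rewrite -/(nsq v) v0 => h; have := pow2_ge_0 (v t); nra.
  rewrite /ip (rsum_ext (g := fun _ => 0)) ?rsum0 ?v0; last by move=> t; rewrite Hv; ring.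
  lra.
have := nsq_ge0 (fun t => u t + (- (ip u v / nsq v)) * v t).
rewrite nsq_lin => h.
have : (ip u v) ^ 2 / nsq v <= nsq u.
  move: h; have -> : nsq u + 2 * - (ip u v / nsq v) * ip u v + (- (ip u v / nsq v)) ^ 2 * nsq v
           = nsq u - (ip u v) ^ 2 / nsq v by field; lra.
  lra.
move=> /(Rmult_le_compat_r (nsq v) _ _ (Rlt_le _ _ vp)).
have -> : ip u v ^ 2 / nsq v * nsq v = ip u v ^ 2 by field; lra.
done.
Qed.

Lemma cauchy_schwarz u v : ip u v <= nrm u * nrm v.
Proof.
apply: Rle_trans (Rle_abs _) _.
rewrite /nrm -sqrt_mult; [|exact: nsq_ge0|exact: nsq_ge0].
rewrite -sqrt_Rsqr_abs; apply: sqrt_le_1_alt; rewrite Rsqr_pow2.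
exact: cauchy_schwarz_sq.
Qed.

Lemma nrm_triangle u v : nrm (fun t => u t + v t) <= nrm u + nrm v.
Proof.
have -> : (fun t => u t + v t) = (fun t => u t + 1 * v t).
  by apply: functional_extensionality => t; ring.
have Hu := nrm_ge0 u; have Hv := nrm_ge0 v; have Huv := cauchy_schwarz u v.
rewrite -(sqrt_pow2 (nrm u + nrm v)); last lra.
apply: sqrt_le_1_alt; change (nsq (fun t => u t + 1 * v t) <= (nrm u + nrm v) ^ 2).
rewrite nsq_lin -!nrm_sq; lra.
Qed.

Lemma nrm_scal c u : nrm (fun t => c * u t) = Rabs c * nrm u.
Proof.
rewrite /nrm (rsum_ext (g := fun t => c ^ 2 * u t ^ 2)); last by move=> t; ring.
rewrite rsum_scal sqrt_mult; [|exact: pow2_ge_0|exact: nsq_ge0].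
by rewrite -(pow2_abs c) sqrt_pow2 //; apply: Rabs_pos.
Qed.

Lemma coord_close_nrm rho : 0 < rho -> exists del, 0 < del /\
  forall q w : T -> R, (forall b, Rabs (q b - w b) < del) -> nrm (vsub q w) < rho.
Proof.
move=> rp; set K := rsum (fun _ : T => 1).
have K0 : 0 <= K by apply: rsum_ge0 => _; lra.
exists (rho / (K + 1)); split; first by apply: Rdiv_lt_0_compat; lra.
move=> q w H; apply: Rle_lt_trans (nrm_le_sum _) _.
apply: Rle_lt_trans (rsum_le (g := fun _ => rho / (K + 1) * 1) _) _.
  by move=> t; have := H t; rewrite /vsub; lra.
by rewrite rsum_scal -/K; exact: shrink_lt.
Qed.

Lemma coord_cv_nrm {u : nat -> T -> R} {xb} :
  (forall a, Un_cv (fun n => u n a) (xb a)) -> Un_cv (fun n => nrm (vsub (u n) xb)) 0.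
Proof.
move=> H; apply: (Un_cv_squeeze0 _ (fun n => rsum (fun a => Rabs (u n a - xb a)))).
  by move=> n; split; [exact: nrm_ge0 | exact: nrm_le_sum].
have -> : 0 = rsum (fun a : T => Rabs 0) by rewrite Rabs_R0 rsum0.
apply: Un_cv_rsum => a; apply: cv_cvabs.
by have := CV_minus _ _ _ _ (H a) (Un_cv_const (xb a)); rewrite Rminus_diag.
Qed.

Lemma nrm_cv_coord {u : nat -> T -> R} {xb} :
  Un_cv (fun n => nrm (vsub (u n) xb)) 0 -> forall a, Un_cv (fun n => u n a) (xb a).
Proof.
move=> H a e ep; have [N HN] := H e ep; exists N => n Hn; move: (HN n Hn).
rewrite /Rdist Rminus_0_r (Rabs_pos_eq (nrm _)); last exact: nrm_ge0.
by have := coord_le_nrm (vsub (u n) xb) a; rewrite /vsub; lra.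
Qed.

End FiniteSums.

(* First-order Taylor estimate for a function with continuous partial
   derivatives on an open set, obtained coordinate by coordinate from the
   mean value theorem. *)
Section FirstOrder.
Context {T : finType} {g : (T -> R) -> R} {Dg : T -> (T -> R) -> R} {O : (T -> R) -> Prop}.
Hypothesis O_open : open_prof O.
Hypothesis g_partial : forall a y, O y -> partial g a y (Dg a y).
Hypothesis Dg_cont : forall a, cont_on O (Dg a).

Lemma upd_upd (p : T -> R) a c t : upd (upd p a c) a t = upd p a t.
Proof. by apply: functional_extensionality => b; rewrite /upd; case: (b == a). Qed.

Lemma mvt_coord (p : T -> R) a al be K e :
  (forall c, Rmin al be <= c <= Rmax al be ->
     O (upd p a c) /\ Rabs (Dg a (upd p a c) - K) <= e) ->
  Rabs (g (upd p a be) - g (upd p a al) - K * (be - al)) <= e * Rabs (be - al).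
Proof.
move=> H.
have Hd : forall c, Rmin al be <= c <= Rmax al be ->
   derivable_pt_lim (fun t => g (upd p a t) - K * t) c (Dg a (upd p a c) - K * 1).
  move=> c /H [Oc _]; apply: derivable_pt_lim_minus.
  + have -> : (fun t => g (upd p a t)) = (fun t => g (upd (upd p a c) a t)).
      by apply: functional_extensionality => t; rewrite upd_upd.
    have := g_partial a _ Oc; rewrite /partial (_ : upd p a c a = c) //.
    by rewrite /upd eqxx.
  + exact: derivable_pt_lim_scal _ _ _ (derivable_pt_lim_id c).
have [c [Hc /H [_ Hle]]] := MVT_abs _ _ al be Hd.
have -> : g (upd p a be) - g (upd p a al) - K * (be - al) =
          (g (upd p a be) - K * be) - (g (upd p a al) - K * al) by ring.
by rewrite Hc Rmult_1_r; apply: Rmult_le_compat_r => //; apply: Rabs_pos.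
Qed.

Lemma near_base w a e : O w -> 0 < e -> exists del, 0 < del /\
  forall q, (forall b, Rabs (q b - w b) < del) -> O q /\ Rabs (Dg a q - Dg a w) <= e.
Proof.
move=> Ow ep; have [r [rp Hr]] := O_open w Ow.
have [del2 [d2p H2]] := coord_close_nrm (T:=T) r rp.
have [del3 [d3p H3]] := Dg_cont a w Ow e ep.
have [del4 [d4p H4]] := coord_close_nrm (T:=T) del3 d3p.
exists (Rmin del2 del4); split; first exact: Rmin_pos.
move=> q Hq; have Oq : O q by apply/Hr/H2 => b; have := Hq b; have := Rmin_l del2 del4; lra.
split=> //; apply/Rlt_le/H3 => //; apply: H4 => b; have := Hq b; have := Rmin_r del2 del4; lra.
Qed.

Definition restrict (s : seq T) (v : T -> R) : T -> R := fun a => if a \in s then v a else 0.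

(* Estimate for a perturbation supported on the coordinates s, by induction on s:
   moving one coordinate at a time, each move is controlled by mvt_coord. *)
Lemma first_order_seq (s : seq T) : uniq s -> forall w, O w -> forall e, 0 < e ->
  exists del, 0 < del /\ forall v, (forall a, Rabs (v a) < del) ->
  Rabs (g (fun a => w a + restrict s v a) - g w - \big[Rplus/R0]_(a <- s) (Dg a w * v a))
    <= e * \big[Rplus/R0]_(a <- s) Rabs (v a).
Proof.
elim: s => [|a s IH] /=.
  move=> _ w _ e ep; exists 1; split => [|v _]; first lra.
  rewrite !big_nil Rmult_0_r (_ : (fun b => w b + restrict [::] v b) = w).
    by rewrite Rminus_diag Rminus_0_r Rabs_R0; lra.
  by apply: functional_extensionality => b; rewrite /restrict in_nil Rplus_0_r.
move=> /andP [a_notin_s s_uniq] w Ow e ep.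
have [del1 [d1p H1]] := IH s_uniq w Ow e ep.
have [del2 [d2p H2]] := near_base _ a _ Ow ep.
exists (Rmin del1 del2); split => [|v Hv]; first exact: Rmin_pos.
have [Hv1 Hv2] : (forall b, Rabs (v b) < del1) /\ (forall b, Rabs (v b) < del2).
  by split=> b; have := Hv b; have := Rmin_l del1 del2; have := Rmin_r del1 del2; lra.
set p := fun b => w b + restrict s v b.
have p_old : upd p a (w a) = p.
  apply: functional_extensionality => b; rewrite /upd /p /restrict.
  by case: eqP => [-> |//]; rewrite (negbTE a_notin_s) Rplus_0_r.
have p_new : (fun b => w b + restrict (a :: s) v b) = upd p a (w a + v a).
  apply: functional_extensionality => b; rewrite /upd /p /restrict inE.
  by case: eqP => [-> |].
have seg_close : forall c, Rmin (w a) (w a + v a) <= c <= Rmax (w a) (w a + v a) ->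
    forall b, Rabs (upd p a c b - w b) <= Rabs (v b).
  move=> c Hc b; rewrite /upd /p /restrict; case: eqP => [-> |_].
    by move: Hc; rewrite /Rmin /Rmax; case: Rle_dec => _; split_Rabs; lra.
  case: (b \in s); first by rewrite Rplus_minus_l; lra.
  by rewrite Rplus_0_r Rminus_diag Rabs_R0; apply: Rabs_pos.
have Hstep := mvt_coord p a (w a) (w a + v a) (Dg a w) e.
rewrite p_old Rplus_minus_l in Hstep.
have {}Hstep := Hstep (fun c Hc => H2 _ (fun b => Rle_lt_trans _ _ _ (seg_close c Hc b) (Hv2 b))).
have HIH := H1 v Hv1; rewrite -/p in HIH.
rewrite p_new !big_cons Rmult_plus_distr_l.
move: HIH Hstep; set S1 := \big[Rplus/R0]_(j <- s) _; set S2 := \big[Rplus/R0]_(j <- s) _.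
move=> HIH Hstep.
rewrite (_ : g (upd p a (w a + v a)) - g w - (Dg a w * v a + S1) =
   (g (upd p a (w a + v a)) - g p - Dg a w * v a) + (g p - g w - S1)); last by ring.
by apply: Rle_trans (Rabs_triang _ _) _; lra.
Qed.

Lemma first_order w : O w -> forall e, 0 < e ->
  exists del, 0 < del /\ forall v, (forall a, Rabs (v a) < del) ->
  Rabs (g (fun a => w a + v a) - g w - rsum (fun a => Dg a w * v a))
    <= e * rsum (fun a => Rabs (v a)).
Proof.
move=> Ow e ep; have [del [dp H]] := first_order_seq _ (index_enum_uniq T) _ Ow _ ep.
exists del; split => // v /H.
by rewrite (_ : (fun a => w a + restrict (index_enum T) v a) = (fun a => w a + v a)) //;
  apply: functional_extensionality => b; rewrite /restrict mem_index_enum.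
Qed.

End FirstOrder.

Lemma nonneg_of_perturbations V H C : 0 <= H ->
  (forall e, 0 < e -> exists t0, 0 < t0 /\ forall t, 0 < t <= t0 -> 0 <= V + e * H + t * C) ->
  0 <= V.
Proof.
move=> H0 Hyp; apply: Rnot_lt_le => Vn; set k := - V / 2.
have kp : 0 < k by rewrite /k; lra.
have [t0 [t0p Ht]] := Hyp (k / (H + 1)) ltac:(apply: Rdiv_lt_0_compat; lra).
set t := Rmin t0 (k / (Rabs C + 1)).
have tp : 0 < t by apply: Rmin_pos => //; apply: Rdiv_lt_0_compat; have := Rabs_pos C; lra.
have := Ht t (conj tp (Rmin_l _ _)).
have := shrink_lt kp H0; have := shrink_lt kp (Rabs_pos C).
have : t * C <= k / (Rabs C + 1) * Rabs C.
  apply: Rle_trans (Rmult_le_compat_l _ _ _ (Rlt_le _ _ tp) (Rle_abs C)) _.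
  by apply: Rmult_le_compat_r; [apply: Rabs_pos | apply: Rmin_r].
rewrite /k; lra.
Qed.

Lemma small_steps {T : finType} (h : T -> R) {del} : 0 < del ->
  exists t0, 0 < t0 <= 1 /\ forall t, 0 < t <= t0 -> forall a, Rabs (t * h a) < del.
Proof.
move=> dp; set Hs := rsum (fun a => Rabs (h a)).
have H0 : 0 <= Hs by apply: rsum_ge0 => b; exact: Rabs_pos.
exists (Rmin 1 (del / (Hs + 1))); split.
  by split; [apply: Rmin_pos; [lra | apply: Rdiv_lt_0_compat; lra] | apply: Rmin_l].
move=> t [tp tle] a; rewrite Rabs_mult (Rabs_pos_eq t); last lra.
apply: Rle_lt_trans (shrink_lt dp H0); apply: Rmult_le_compat; [lra | exact: Rabs_pos | |].
  exact: Rle_trans tle (Rmin_r _ _).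
exact: (rsum_term (fun b => Rabs (h b)) a (fun b => Rabs_pos (h b))).
Qed.

Section Blocks.
Context {N : nat} {d : 'I_N -> nat}.

Lemma rsum_Idx (G : Idx d -> R) :
  rsum G = \big[Rplus/R0]_(j : 'I_N) rsum (fun k : 'I_(d j) => G (coord k)).
Proof.
rewrite /rsum (sig_big_dep (fun _ => true) (fun _ _ => true) (fun j k => G (coord k))) /=.
by apply: eq_bigr => -[j k].
Qed.

Lemma rsum_block (i : 'I_N) (G : Idx d -> R) :
  rsum (fun k : 'I_(d i) => G (coord k)) = rsum (fun a : Idx d => if tag a == i then G a else 0).
Proof.
rewrite rsum_Idx (bigD1 i) //= big1 ?Rplus_0_r; first by apply: eq_bigr => k _; rewrite eqxx.
by move=> j /negbTE ji; apply: big1 => k _; rewrite /= ji.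
Qed.

Lemma sum_blocks (X : Idx d -> R) :
  \big[Rplus/R0]_(i : 'I_N) rsum (fun a : Idx d => if tag a == i then X a else 0) = rsum X.
Proof.
rewrite /rsum exchange_big; apply: eq_bigr => a _.
by rewrite -big_mkcond (big_pred1 (tag a)) // => i; rewrite eq_sym.
Qed.

Lemma nrm_block_le (u v : profile d) i :
  nrm (vsub (block u i) (block v i)) <= nrm (vsub u v).
Proof.
apply: sqrt_le_1_alt; rewrite (rsum_block i (fun a => (u a - v a) ^ 2)).
by apply: rsum_le => a; case: (tag a == i); [apply: Rle_refl | apply: pow2_ge_0].
Qed.

End Blocks.

(* Variational characterization of equilibria: by convexity of f_i in x_i, a
   NE of the game (or of a regularized game) is exactly a solution of the
   variational inequality of its gradient map. *)
Section Variational.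
Context {N : nat} {d : 'I_N -> nat} {Q : forall i : 'I_N, ('I_(d i) -> R) -> Prop}
  {f : 'I_N -> profile d -> R} {O : profile d -> Prop} {D1 : 'I_N -> Idx d -> profile d -> R}.
Hypothesis Q_convex : forall i, convex_blk (Q i).
Hypothesis f_convex : forall i (y w : profile d) t, inQ Q y -> inQ Q w -> same_off i y w ->
  0 <= t <= 1 -> f i (fun a => t * y a + (1 - t) * w a) <= t * f i y + (1 - t) * f i w.
Hypothesis O_open : open_prof O.
Hypothesis Q_in_O : forall y, inQ Q y -> O y.
Hypothesis f_partial : forall i a y, O y -> partial (f i) a y (D1 i a y).
Hypothesis D1_cont : forall i a, cont_on O (D1 i a).

Definition solves_VI (G : profile d -> profile d) (p : profile d) : Prop :=
  inQ Q p /\ forall v, inQ Q v -> 0 <= rsum (fun a => G p a * (v a - p a)).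

Definition block_dir (i : 'I_N) (w v : profile d) : profile d :=
  fun a => if tag a == i then v a - w a else 0.

Lemma block_dir_feasible i w v t : inQ Q w -> inQ Q v -> 0 <= t <= 1 ->
  let y := fun a => w a + t * block_dir i w v a in same_off i w y /\ Q i (block y i).
Proof.
move=> wQ vQ t01 y; split; first by move=> a /eqP /negbTE ta; rewrite /y /block_dir ta; ring.
rewrite (_ : block y i = fun k => t * block v i k + (1 - t) * block w i k).
  exact: Q_convex.
by apply: functional_extensionality => k; rewrite /y /block /block_dir /= eqxx; ring.
Qed.

Lemma cost_expansion i w (h : profile d) e : inQ Q w -> 0 < e ->
  exists t0, 0 < t0 <= 1 /\ forall t, 0 < t <= t0 ->
    Rabs (f i (fun a => w a + t * h a) - f i w - t * rsum (fun a => D1 i a w * h a))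
      <= e * t * rsum (fun a => Rabs (h a)).
Proof.
move=> wQ ep.
have [del [dp Hdel]] := first_order O_open (f_partial i) (D1_cont i) _ (Q_in_O _ wQ) _ ep.
have [t0 [t0p Ht0]] := small_steps h dp.
exists t0; split => // t Ht; have tp : 0 < t by case: Ht.
have eD : rsum (fun a => D1 i a w * (t * h a)) = t * rsum (fun a => D1 i a w * h a).
  by rewrite -rsum_scal; apply: rsum_ext => a; ring.
have eA : rsum (fun a => Rabs (t * h a)) = t * rsum (fun a => Rabs (h a)).
  by rewrite -rsum_scal; apply: rsum_ext => a; rewrite Rabs_mult Rabs_pos_eq //; lra.
by have := Hdel _ (Ht0 t Ht); rewrite eD eA Rmult_assoc.
Qed.

Lemma reg_NE_solves_VI {tau y w} :
  isNE Q (reg_costs f tau y) w -> solves_VI (F_tau (grad D1) tau y) w.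
Proof.
move=> [wQ HNE]; split=> // v vQ; rewrite -sum_blocks.
apply: (big_ind (fun x => 0 <= x)) => [|x1 x2|i _]; [lra | lra |].
set h := block_dir i w v.
set L := rsum (fun a => D1 i a w * h a); set P := rsum (fun a => (w a - y a) * h a).
set B := rsum (fun a => h a ^ 2); set Hs := rsum (fun a => Rabs (h a)).
rewrite (_ : rsum _ = L + tau * P); last first.
  rewrite /L /P -rsum_scal -rsum_add; apply: rsum_ext => a.
  by rewrite /h /block_dir /F_tau /grad; case: eqP => [-> | _] /=; ring.
apply: (nonneg_of_perturbations _ Hs (tau / 2 * B)).
  by apply: rsum_ge0 => a; exact: Rabs_pos.
move=> e ep; have [t0 [[t0p t01] Hexp]] := cost_expansion i _ h _ wQ ep.
exists t0; split => // t Ht; have [tp tt0] := Ht.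
have [so Qy] := block_dir_feasible i _ _ _ wQ vQ (conj (Rlt_le _ _ tp) (Rle_trans _ _ _ tt0 t01)).
have Hc := HNE i _ so Qy; rewrite /reg_costs !nrm_sq /nsq /vsub in Hc.
rewrite (rsum_block i (fun a => (w a - y a) ^ 2))
  (rsum_block i (fun a => (w a + t * block_dir i w v a - y a) ^ 2)) in Hc.
have quad : rsum (fun a => if tag a == i then (w a + t * block_dir i w v a - y a) ^ 2 else 0)
    = rsum (fun a => if tag a == i then (w a - y a) ^ 2 else 0) + 2 * t * P + t ^ 2 * B.
  rewrite /P /B -[X in _ = X + _ + _]Rmult_1_l -rsum_lin3.
  by apply: rsum_ext => a; rewrite /h /block_dir; case: eqP => _ /=; ring.
rewrite quad -/h in Hc; have := Hexp t Ht; rewrite -/L -/Hs => Hexp_t.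
set Zw := rsum (fun a => if tag a == i then (w a - y a) ^ 2 else 0) in Hc.
apply: (Rmult_le_reg_l t) => //; rewrite Rmult_0_r.
move: Hexp_t; split_Rabs; lra.
Qed.

(* A NE of the game solves VI(Q, F): it is a NE of the trivially regularized game. *)
Lemma NE_solves_VI {p} : isNE Q f p -> solves_VI (grad D1) p.
Proof.
move=> [pQ HNE].
have HNE0 : isNE Q (reg_costs f 0 p) p.
  split => // i y so Qy; rewrite /reg_costs !Rdiv_0_l !Rmult_0_l !Rplus_0_r.
  exact: HNE.
have [_ HVI] := reg_NE_solves_VI HNE0; split=> // v /HVI.
by rewrite (rsum_ext (g := fun a => grad D1 p a * (v a - p a))) // => a; rewrite /F_tau; ring.
Qed.

(* Conversely, a solution of VI(Q, F) is a NE, by convexity of f_i in x_i. *)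
Lemma solves_VI_NE {p} : solves_VI (grad D1) p -> isNE Q f p.
Proof.
move=> [pQ HVI]; split => // i y so Qy.
have yQ : inQ Q y.
  move=> j; case: (eqVneq j i) => [-> // | ji].
  rewrite (_ : block y j = block p j); first exact: pQ.
  by apply: functional_extensionality => k; apply: so => /= e; move: ji; rewrite e eqxx.
set h := fun a => y a - p a; set Hs := rsum (fun a => Rabs (h a)).
set L := rsum (fun a => D1 i a p * h a).
have L0 : 0 <= L.
  rewrite /L (rsum_ext (g := fun a => grad D1 p a * (y a - p a))); first exact: HVI.
  move=> a; rewrite /h /grad; case: (eqVneq (tag a) i) => [-> // | ta].
  by rewrite so ?Rminus_diag ?Rmult_0_r // => /eqP; rewrite (negbTE ta).
suff : 0 <= f i y - f i p by lra.
apply: (nonneg_of_perturbations _ Hs 0); first by apply: rsum_ge0 => a; exact: Rabs_pos.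
move=> e ep; have [t0 [[t0p t01] Hexp]] := cost_expansion i _ h _ pQ ep.
exists t0; split => // t Ht; have [tp tt0] := Ht.
have Hcv := f_convex i y p t yQ pQ (fun a ta => esym (so a ta))
  (conj (Rlt_le _ _ tp) (Rle_trans _ _ _ tt0 t01)).
rewrite (_ : (fun a => t * y a + (1 - t) * p a) = (fun a => p a + t * h a)) in Hcv; last first.
  by apply: functional_extensionality => a; rewrite /h; ring.
have := Hexp t Ht; rewrite -/L -/Hs => Hexp_t.
apply: (Rmult_le_reg_l t) => //; rewrite Rmult_0_r.
have : 0 <= t * L by apply: Rmult_le_pos; lra.
move: Hexp_t; split_Rabs; lra.
Qed.

End Variational.

Section RelaxedStep.
Context {T : finType}.

Definition relax (eta : R) (x z : T -> R) : T -> R := fun a => (1 - eta) * x a + eta * z a.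

Lemma resolvent_firm (F : (T -> R) -> T -> R) tau (x w p : T -> R) : 0 < tau ->
  0 <= rsum (fun a => (F w a + tau * (w a - x a)) * (p a - w a)) ->
  0 <= rsum (fun a => F p a * (w a - p a)) ->
  0 <= rsum (fun a => (F w a - F p a) * (w a - p a)) ->
  nsq (vsub w p) + nsq (vsub x w) <= nsq (vsub x p).
Proof.
move=> tp H1 H2 H3; set S := rsum (fun a => (x a - w a) * (w a - p a)).
have e1 : rsum (fun a => (F w a + tau * (w a - x a)) * (p a - w a)) + rsum (fun a => F p a * (w a - p a))
    + rsum (fun a => (F w a - F p a) * (w a - p a)) = tau * S.
  by rewrite -!rsum_add -rsum_scal; apply: rsum_ext => a; ring.
have S0 : 0 <= S by apply: (Rmult_le_reg_l tau); lra.
suff -> : nsq (vsub x p) = nsq (vsub w p) + nsq (vsub x w) + 2 * S by lra.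
by rewrite /nsq /S -!rsum_add -rsum_scal -rsum_add; apply: rsum_ext => a; rewrite /vsub; ring.
Qed.

Lemma relax_decrease eta (x w p : T -> R) : 0 <= eta <= 2 ->
  nsq (vsub w p) + nsq (vsub x w) <= nsq (vsub x p) ->
  nsq (vsub (relax eta x w) p) <= nsq (vsub x p) - eta * (2 - eta) * nsq (vsub x w).
Proof.
move=> eta02 firm.
rewrite (_ : nsq (vsub (relax eta x w) p) = (1 - eta) * nsq (vsub x p) + eta * nsq (vsub w p)
    + (- (eta * (1 - eta))) * nsq (vsub x w)).
  by have := nsq_ge0 (vsub x w); nra.
by rewrite -rsum_lin3; apply: rsum_ext => a; rewrite /vsub /relax; ring.
Qed.

Lemma inexact_step eta Rm RM ep (x w z p : T -> R) :
  0 < Rm -> Rm <= eta <= RM -> RM < 2 -> nrm (vsub z w) <= ep ->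
  nsq (vsub w p) + nsq (vsub x w) <= nsq (vsub x p) ->
  nrm (vsub (relax eta x z) p) <= nrm (vsub x p) + 2 * ep /\
  Rm * (2 - RM) * nrm (vsub x w) ^ 2 <=
    nrm (vsub x p) ^ 2 - nrm (vsub (relax eta x z) p) ^ 2 + 4 * ep * nrm (vsub x p) + 4 * ep ^ 2.
Proof.
move=> Rmp [Rm_eta eta_RM] RM2 zw firm.
have gain : Rm * (2 - RM) <= eta * (2 - eta) by nra.
have eta02 : 0 <= eta <= 2 by lra.
have dec := relax_decrease eta x w p eta02 firm.
rewrite -!nrm_sq in dec.
have exact_le : nrm (vsub (relax eta x w) p) <= nrm (vsub x p).
  apply: Rsqr_incr_0_var; last exact: nrm_ge0.
  by rewrite !Rsqr_pow2; have := pow2_ge_0 (nrm (vsub x w)); nra.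
(* the error z - w moves the relaxed point by eta ||z - w|| <= 2 ep *)
have err : nrm (vsub (relax eta x z) p) <= nrm (vsub (relax eta x w) p) + 2 * ep.
  rewrite (_ : vsub (relax eta x z) p = fun a => vsub (relax eta x w) p a + eta * vsub z w a).
    apply: Rle_trans (nrm_triangle _ _) _; rewrite nrm_scal Rabs_pos_eq; last lra.
    by have := nrm_ge0 (vsub z w); nra.
  by apply: functional_extensionality => a; rewrite /vsub /relax; ring.
split; first lra.
have := nrm_ge0 (vsub (relax eta x z) p); have := nrm_ge0 (vsub (relax eta x w) p).
have := pow2_ge_0 (nrm (vsub x w)); have := nrm_ge0 (vsub z w).
move: dec exact_le err gain; set A := nrm (vsub (relax eta x z) p).
set U := nrm (vsub (relax eta x w) p); set X := nrm (vsub x p); set W := nrm (vsub x w).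
move=> *; have : A ^ 2 <= (U + 2 * ep) ^ 2 by nra.
nra.
Qed.

End RelaxedStep.

Section QuasiFejer.
Context {T : finType}.
Variables (C : (T -> R) -> Prop) (x : nat -> T -> R) (e : nat -> R) (s : R).
Hypothesis e_ge0 : forall n, 0 <= e n.
Hypothesis e_sum : infinite_sum e s.
Hypothesis fejer : forall p, C p -> forall n, nrm (vsub (x n.+1) p) <= nrm (vsub (x n) p) + e n.

Lemma fejer_dist_cv {p} : C p -> (exists l, Un_cv (fun n => nrm (vsub (x n) p)) l) /\
  forall n, nrm (vsub (x n) p) <= nrm (vsub (x 0%N) p) + s.
Proof. by move=> Cp; apply: (quasi_fejer_cv _ e s _ e_ge0 e_sum (fejer _ Cp)) => n; exact: nrm_ge0. Qed.

Lemma fejer_bounded {p} : C p -> forall a, exists B, forall n, Rabs (x n a) <= B.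
Proof.
move=> Cp a; have [_ Hb] := fejer_dist_cv Cp.
exists (nrm (vsub (x 0%N) p) + s + Rabs (p a)) => n.
have := coord_le_nrm (vsub (x n) p) a; have := Hb n; have := Rabs_triang (x n a - p a) (p a).
by rewrite /vsub (_ : x n a - p a + p a = x n a); [lra | ring].
Qed.

Theorem quasi_fejer_limit : (exists p, C p) ->
  (forall phi xb, strict_incr phi -> Un_cv (fun n => nrm (vsub (x (phi n)) xb)) 0 -> C xb) ->
  exists xs, C xs /\ conv_to x xs.
Proof.
move=> [p Cp] cluster.
have [phi [Hphi [xb /coord_cv_nrm Hsub]]] := bolzano_weierstrass (fejer_bounded Cp).
have Cxb := cluster _ _ Hphi Hsub.
have [[l Hl] _] := fejer_dist_cv Cxb.
have l0 : l = 0 := UL_sequence _ _ _ (Un_cv_subseq Hl Hphi) Hsub.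
exists xb; split => // eps ep; have [M HM] := Hl eps ep; exists M => n /leP /HM.
by rewrite l0 /Rdist Rminus_0_r Rabs_pos_eq //; exact: nrm_ge0.
Qed.

End QuasiFejer.

Lemma cont_on_seq {T : finType} {O : (T -> R) -> Prop} {h : (T -> R) -> R} {y : nat -> T -> R} {xb} :
  cont_on O h -> O xb -> (forall n, O (y n)) -> Un_cv (fun n => nrm (vsub (y n) xb)) 0 ->
  Un_cv (fun n => h (y n)) (h xb).
Proof.
move=> Hc Ox Oy Hy e ep; have [del [dp Hd]] := Hc xb Ox e ep.
have [M HM] := Hy del dp; exists M => n /HM.
rewrite /Rdist Rminus_0_r Rabs_pos_eq; last exact: nrm_ge0.
exact: Hd (Oy n).
Qed.

Lemma limit_in_Q {N : nat} {d : 'I_N -> nat} {Q : forall i : 'I_N, ('I_(d i) -> R) -> Prop}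
  {y : nat -> profile d} {xb} : (forall i, closed_blk (Q i)) -> (forall n, inQ Q (y n)) ->
  Un_cv (fun n => nrm (vsub (y n) xb)) 0 -> inQ Q xb.
Proof.
move=> Q_closed yQ Hy i; apply: NNPP => notQ.
have [r [rp Hr]] := Q_closed i _ notQ; have [M HM] := Hy r rp.
apply: (Hr (block (y M) i)); last exact: yQ.
apply: Rle_lt_trans (nrm_block_le _ _ i) _; move: (HM M (le_n _)).
by rewrite /Rdist Rminus_0_r Rabs_pos_eq //; exact: nrm_ge0.
Qed.

Section Iteration.
Context {N : nat} {d : 'I_N -> nat} {Q : forall i : 'I_N, ('I_(d i) -> R) -> Prop}
  {f : 'I_N -> profile d -> R} {O : profile d -> Prop} {D1 : 'I_N -> Idx d -> profile d -> R}.
Context {tau s Rm RM : R} {eps eta : nat -> R} {x z w : nat -> profile d}.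
Hypothesis Q_closed : forall i, closed_blk (Q i).
Hypothesis Q_convex : forall i, convex_blk (Q i).
Hypothesis f_convex : forall i (y v : profile d) t, inQ Q y -> inQ Q v -> same_off i y v ->
  0 <= t <= 1 -> f i (fun a => t * y a + (1 - t) * v a) <= t * f i y + (1 - t) * f i v.
Hypothesis O_open : open_prof O.
Hypothesis Q_in_O : forall y, inQ Q y -> O y.
Hypothesis f_partial : forall i a y, O y -> partial (f i) a y (D1 i a y).
Hypothesis D1_cont : forall i a, cont_on O (D1 i a).
Hypothesis F_monotone : forall y v, inQ Q y -> inQ Q v ->
  0 <= rsum (fun a => (grad D1 y a - grad D1 v a) * (y a - v a)).
Hypothesis tau_pos : 0 < tau.
Hypothesis eps_ge0 : forall n, 0 <= eps n.
Hypothesis eps_sum : infinite_sum eps s.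
Hypothesis Rm_pos : 0 < Rm.
Hypothesis RM_lt2 : RM < 2.
Hypothesis eta_range : forall n, Rm <= eta n <= RM.
Hypothesis x_step : forall n, x n.+1 = relax (eta n) (x n) (z n).
Hypothesis w_NE : forall n, isNE Q (reg_costs f tau (x n)) (w n).
Hypothesis z_close : forall n, nrm (vsub (z n) (w n)) <= eps n.

Let w_VI n := reg_NE_solves_VI Q_convex O_open Q_in_O f_partial D1_cont (w_NE n).

Lemma iterate_step p : isNE Q f p -> forall n,
  nrm (vsub (x n.+1) p) <= nrm (vsub (x n) p) + 2 * eps n /\
  Rm * (2 - RM) * nrm (vsub (x n) (w n)) ^ 2 <=
    nrm (vsub (x n) p) ^ 2 - nrm (vsub (x n.+1) p) ^ 2
    + 4 * eps n * nrm (vsub (x n) p) + 4 * eps n ^ 2.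
Proof.
move=> Hp n; rewrite x_step.
have [wQ wVI] := w_VI n.
have [pQ pVI] := NE_solves_VI Q_convex O_open Q_in_O f_partial D1_cont Hp.
apply: inexact_step Rm_pos (eta_range n) RM_lt2 (z_close n) _.
exact: (resolvent_firm (grad D1) _ _ _ _ tau_pos (wVI p pQ) (pVI (w n) wQ) (F_monotone _ _ wQ pQ)).
Qed.

Lemma residual_cv0 : (exists p, isNE Q f p) -> Un_cv (fun n => nrm (vsub (x n) (w n))) 0.
Proof.
move=> [p Hp].
have two_eps_ge0 n : 0 <= 2 * eps n by have := eps_ge0 n; lra.
have [[l Hl] _] := quasi_fejer_cv _ _ _ (fun n => nrm_ge0 _) two_eps_ge0
  (infinite_sum_scal _ _ 2 eps_sum) (fun n => (iterate_step _ Hp n).1).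
set D := fun n => nrm (vsub (x n) p).
have Hl1 : Un_cv (fun n => D n.+1) l := Un_cv_subseq Hl (fun n => ltnSn n.+1).
have eps0 := summable_cv0 eps_sum.
have Hbound : Un_cv (fun n => D n * D n - D n.+1 * D n.+1 + (4 * eps n) * D n + 4 * (eps n * eps n))
                    (l * l - l * l + (4 * 0) * l + 4 * (0 * 0)).
  apply: CV_plus; [apply: CV_plus; [apply: CV_minus; exact: CV_mult |] |].
  - by apply: CV_mult => //; apply: CV_mult => //; exact: Un_cv_const.
  - by apply: CV_mult; [exact: Un_cv_const | exact: CV_mult].
rewrite (_ : l * l - l * l + (4 * 0) * l + 4 * (0 * 0) = 0) in Hbound; last by ring.
apply: Un_cv_sqr0 => [n | ]; first exact: nrm_ge0.
apply: (Un_cv_scal0 _ (Rm * (2 - RM))); first by apply: Rmult_lt_0_compat; lra.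
apply: (Un_cv_squeeze0 _ _ _ Hbound) => n; split.
  by apply: Rmult_le_pos; [apply: Rmult_le_pos; lra | apply: pow2_ge_0].
by have := (iterate_step _ Hp n).2; rewrite /D /=; lra.
Qed.

Lemma cluster_NE phi xb : (exists p, isNE Q f p) -> strict_incr phi ->
  Un_cv (fun n => nrm (vsub (x (phi n)) xb)) 0 -> isNE Q f xb.
Proof.
move=> NE_ex Hphi Hx.
have Hr := Un_cv_subseq (residual_cv0 NE_ex) Hphi.
have Hw : Un_cv (fun n => nrm (vsub (w (phi n)) xb)) 0.
  have := CV_plus _ _ _ _ Hr Hx; rewrite Rplus_0_r => Hsum.
  apply: (Un_cv_squeeze0 _ _ _ Hsum) => n; split; first exact: nrm_ge0.
  rewrite (_ : vsub (w (phi n)) xb = fun a => vsub (w (phi n)) (x (phi n)) a + vsub (x (phi n)) xb a).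
    by apply: Rle_trans (nrm_triangle _ _) _; rewrite (nrm_vsub_sym (w (phi n))); lra.
  by apply: functional_extensionality => a; rewrite /vsub; ring.
have wQ n : inQ Q (w n) by have [] := w_VI n.
have xbQ : inQ Q xb := limit_in_Q Q_closed (fun n => wQ (phi n)) Hw.
apply: (solves_VI_NE f_convex O_open Q_in_O f_partial D1_cont).
split=> // v vQ.
(* pass to the limit in the VI of the regularized games *)
have Hlim : Un_cv (fun n => rsum (fun a => F_tau (grad D1) tau (x (phi n)) (w (phi n)) a
                                      * (v a - w (phi n) a)))
                  (rsum (fun a => F_tau (grad D1) tau xb xb a * (v a - xb a))).
  apply: Un_cv_rsum => a; apply: CV_mult.
    apply: CV_plus; last first.
      apply: CV_mult; first exact: Un_cv_const.
      by apply: CV_minus; [exact: nrm_cv_coord Hw a | exact: nrm_cv_coord Hx a].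
    exact: cont_on_seq (D1_cont _ a) (Q_in_O _ xbQ) (fun n => Q_in_O _ (wQ (phi n))) Hw.
  by apply: CV_minus; [exact: Un_cv_const | exact: nrm_cv_coord Hw a].
rewrite (rsum_ext (g := fun a => F_tau (grad D1) tau xb xb a * (v a - xb a))); last first.
  by move=> a; rewrite /F_tau; ring.
by apply: (Rle_cv_lim _ (Un_cv_const 0) Hlim) => n; exact: (w_VI (phi n)).2 v vQ.
Qed.

Theorem iteration_converges : (exists p, isNE Q f p) -> exists xs, isNE Q f xs /\ conv_to x xs.
Proof.
move=> NE_ex; apply: (quasi_fejer_limit (isNE Q f) x (fun n => 2 * eps n) (2 * s)) => //.
- by move=> n; have := eps_ge0 n; lra.
- exact: infinite_sum_scal.
- by move=> p Hp n; have [] := iterate_step _ Hp n.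
- by move=> phi xb; exact: cluster_NE.
Qed.

End Iteration.

Theorem mainTheorem8
  (N : nat) (d : 'I_N -> nat)
  (Q : forall i : 'I_N, ('I_(d i) -> R) -> Prop)
  (f : 'I_N -> profile d -> R)
  (O : profile d -> Prop)
  (D1 : 'I_N -> Idx d -> profile d -> R)
  (D2 : 'I_N -> Idx d -> Idx d -> profile d -> R)
  (tau : R) (eps eta : nat -> R) (Rm RM : R)
  (x z : nat -> profile d) :
  (* Assumption 1: Q_i nonempty, closed, convex *)
  (forall i, exists u, Q i u) ->
  (forall i, closed_blk (Q i)) ->
  (forall i, convex_blk (Q i)) ->
  (* Assumption 1: f_i convex in x_i on Q *)
  (forall i (y w : profile d) t, inQ Q y -> inQ Q w -> same_off i y w -> 0 <= t <= 1 ->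
     f i (fun a => t * y a + (1 - t) * w a) <= t * f i y + (1 - t) * f i w) ->
  (* Assumption 2: f_i twice continuously differentiable (on an open set O containing Q),
     D1 / D2 being its first / second partial derivatives, bounded derivatives on Q *)
  open_prof O ->
  (forall y, inQ Q y -> O y) ->
  (forall i a y, O y -> partial (f i) a y (D1 i a y)) ->
  (forall i a b y, O y -> partial (D1 i a) b y (D2 i a b y)) ->
  (forall i a, cont_on O (D1 i a)) ->
  (forall i a b, cont_on O (D2 i a b)) ->
  (exists M, forall i a b y, inQ Q y -> Rabs (D2 i a b y) <= M) ->
  (* monotone NEP: F = grad D1 monotone on Q *)
  (forall y w, inQ Q y -> inQ Q w ->
     0 <= rsum (fun a => (grad D1 y a - grad D1 w a) * (y a - w a))) ->
  (* nonempty set of NE *)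
  (exists xs, isNE Q f xs) ->
  (* tau > 0 and Upsilon_{F_{tau,y}} is a P-matrix for every y *)
  0 < tau ->
  (forall (y : profile d) (JG : block_jac d),
     (forall i j w (k : 'I_(d i)) (l : 'I_(d j)), inQ Q w ->
        partial (fun v => F_tau (grad D1) tau y v (coord k)) (coord l) w (JG i j w k l)) ->
     exists U, is_Upsilon Q JG U /\ P_matrix U) ->
  (* step data *)
  (forall n, 0 <= eps n) ->
  (exists s, infinite_sum eps s) ->
  0 < Rm -> Rm <= RM -> RM < 2 ->
  (forall n, Rm <= eta n <= RM) ->
  (* the iteration *)
  inQ Q (x 0%nat) ->
  (forall n, x (S n) = (fun a => (1 - eta n) * x n a + eta n * z n a)) ->
  (forall n, exists w, isNE Q (reg_costs f tau (x n)) w /\ nrm (vsub (z n) w) <= eps n) ->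
  exists xs, isNE Q f xs /\ conv_to x xs.
Proof.
move=> _ Q_closed Q_convex f_convex O_open Q_in_O f_partial _ D1_cont _ _ F_monotone NE_ex
  tau_pos _ eps_ge0 [s eps_sum] Rm_pos _ RM_lt2 eta_range _ x_step inexact.
have [w /all_and2 [w_NE z_close]] := choice _ inexact.
exact: (iteration_converges Q_closed Q_convex f_convex O_open Q_in_O f_partial D1_cont
  F_monotone tau_pos eps_ge0 eps_sum Rm_pos RM_lt2 eta_range x_step w_NE z_close NE_ex).
Qed.
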